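(* Let $K$ be a field, $A=K(x)[[y]]$ the algebra of formal power series in $y$ with coefficients in $K(x)$, and let $p,q$ be mutually prime positive integers. Suppose $P,Q\in A$ satisfy $P^p=Q^q$. For $n\geq0$ let $P_n,Q_n$ be the truncations of $P,Q$ to degree $n$ in $y$, and let $\omega=pQ_n\,dP_n-qP_n\,dQ_n$. Then $\omega$ is divisible by $y^n$, and the reduced rational differential one-form $\omega_{red}=\omega/y^n$ is of degree $n$ with respect to $y$ and vanishes along the line $\{y=0\}$.
   Context: For $P=\sum_{i\geq0}a_i(x)y^i\in A$, its truncation is $P_n=\sum_{i=0}^n a_i(x)y^i\in K(x)[y]$. For a rational one-form $\omega=\alpha\,dx+\beta\,dy$ with $\alpha,\beta\in K(x)[y]$, its degree with respect to $y$ is $\deg_y\omega=\max\{\deg_y\alpha,\deg_y\beta+1\}$. Divisibility by $y^n$ means both $\alpha$ and $\beta$ are divisible by $y^n$ in $K(x)[y]$; vanishing along $\{y=0\}$ means the pullback of the form to the line $y=0$ is zero. *)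

From HB Require Import structures.
From mathcomp Require Import all_boot all_order all_algebra.
From mathcomp Require Import fraction.
Set Implicit Arguments. Unset Strict Implicit. Unset Printing Implicit Defensive.
Import GRing.Theory.
Local Open Scope ring_scope.

Notation ratfun K := {fraction {poly K}}.

(* d/dx on K(x): computed on the canonical representative n/d of f,
   as (n' d - n d') / d^2 (independent of the representative). *)
Definition ddx (K : fieldType) (f : ratfun K) : ratfun K :=
  let r := repr f in
  @FracField.tofrac _ ((\n_r)^`() * \d_r - \n_r * (\d_r)^`())
  / @FracField.tofrac _ ((\d_r) ^+ 2).

(* Formal power series in y over a commutative ring R = K(x),
   represented by their coefficient sequence. *)
Definition pseries (R : Type) := nat -> R.

Definition psmul (R : comNzRingType) (f g : pseries R) : pseries R :=
  fun n => \sum_(i < n.+1) f i * g (n - i)%N.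
Definition psone (R : comNzRingType) : pseries R :=
  fun n => if n == 0%N then 1 else 0.
Definition psexp (R : comNzRingType) (f : pseries R) (k : nat) : pseries R :=
  iter k (psmul f) (@psone R).

Definition trunc (R : comNzRingType) (n : nat) (f : pseries R) : {poly R} :=
  \poly_(i < n.+1) f i.

(* A rational one-form alpha dx + beta dy, alpha, beta in K(x)[y]. *)
Record oneform (K : fieldType) := OneForm {
  fdx : {poly ratfun K};
  fdy : {poly ratfun K} }.

Definition dform (K : fieldType) (F : {poly ratfun K}) : oneform K :=
  OneForm (map_poly (@ddx K) F) (F^`()).

Definition omega_form (K : fieldType) (p q : nat) (Pn Qn : {poly ratfun K})
  : oneform K :=
  OneForm (p%:R * Qn * fdx (dform Pn) - q%:R * Pn * fdx (dform Qn))
          (p%:R * Qn * fdy (dform Pn) - q%:R * Pn * fdy (dform Qn)).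

Definition form_divisible_by_yn (K : fieldType) (n : nat) (w : oneform K) :=
  ('X^n %| fdx w) && ('X^n %| fdy w).

Definition form_div_yn (K : fieldType) (n : nat) (w : oneform K) : oneform K :=
  OneForm (fdx w %/ 'X^n) (fdy w %/ 'X^n).

(* deg_y (alpha dx + beta dy) = max (deg_y alpha, deg_y beta + 1),
   with deg_y beta + 1 = size beta for beta <> 0 and the zero polynomial
   contributing 0. *)
Definition form_degy (K : fieldType) (w : oneform K) : nat :=
  maxn (size (fdx w)).-1 (size (fdy w)).

(* vanishing along {y = 0}: the pullback to y = 0 is alpha(x,0) dx *)
Definition vanishes_on_y0 (K : fieldType) (w : oneform K) : Prop :=
  (fdx w).[0] = 0.

(* Truncate P and Q at the order N = p v + n, where v is the y-adic valuation
   of P, getting A and B with A^p = B^q mod y^(N+1).  For a derivation D of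
   K(x)[y], A^p (p B DA - q A DB) = A B D(A^p - B^q) + q A DB (B^q - A^p), so
   A^p times the coefficient of omega built from A and B is divisible by
   y^(N+1) when D = d/dx, which preserves divisibility by powers of y, and by
   y^N when D = d/dy, which loses one power.  Cancelling A^p, of valuation p v,
   leaves divisibility by y^(n+1), resp. y^n, and this passes to the
   truncations at order n.  That the dx-coefficient is divisible by y^(n+1)
   is exactly the vanishing of omega / y^n along y = 0; the degree bound is a
   count of degrees. *)

From HB Require Import structures.
From mathcomp Require Import all_boot all_order all_algebra.
From mathcomp Require Import fraction ring zify.
Set Implicit Arguments. Unset Strict Implicit. Unset Printing Implicit Defensive.
Import GRing.Theory.
Local Open Scope ring_scope.

Lemma derivation1 {R : nzRingType} {f : R -> R} :
  (forall a b, f (a * b) = f a * b + a * f b) -> f 1 = 0.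
Proof.
move=> fM; have := fM 1 1.
by rewrite !mulr1 mul1r -{1}[f 1]addr0 => /addrI /esym.
Qed.

Section FracRepr.
Context {R : idomainType}.
Local Notation tofrac := (@FracField.tofrac R).

Lemma fracE (f : {fraction R}) :
  f = tofrac (\n_(repr f)) / tofrac (\d_(repr f)).
Proof.
set r := repr f.
have dr0 : \d_r != 0 := denom_ratioP r.
have d0 : tofrac \d_r != 0 by rewrite tofrac_eq0.
apply: (mulIf d0); rewrite divfK //.
have -> : f * tofrac \d_r = \pi_{fraction R}%qT (FracField.mulf r (Ratio \d_r 1)).
  by rewrite FracField.pi_mul reprK; unlock FracField.tofrac.
unlock FracField.tofrac; apply/eqmodP => /=.
rewrite FracField.equivfE /FracField.mulf.
by rewrite !numden_Ratio ?mulr1 ?oner_neq0 // mulrC.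
Qed.

Lemma frac_ind (P : {fraction R} -> Prop) :
  (forall a b, b != 0 -> P (tofrac a / tofrac b)) -> forall f, P f.
Proof. by move=> Pab f; rewrite (fracE f); apply/Pab/denom_ratioP. Qed.

Lemma eq_frac (a b c d : R) : b != 0 -> d != 0 ->
  (tofrac a / tofrac b == tofrac c / tofrac d) = (a * d == c * b).
Proof. by move=> b0 d0; rewrite eqr_div ?tofrac_eq0 // -!tofracM tofrac_eq. Qed.

Lemma subf_frac (a b c d : R) : b != 0 -> d != 0 ->
  tofrac a / tofrac b - tofrac c / tofrac d = tofrac (a * d - c * b) / tofrac (b * d).
Proof.
move=> b0 d0; rewrite -mulNr -rmorphN addf_div ?tofrac_eq0 //.
by rewrite -!rmorphM -rmorphD mulNr.
Qed.
End FracRepr.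

Section Ddx.
Context {K : fieldType}.
Local Notation tofrac := (@FracField.tofrac {poly K}).

Lemma ddx_frac (a b : {poly K}) : b != 0 ->
  ddx (tofrac a / tofrac b) = tofrac (a^`() * b - a * b^`()) / tofrac (b ^+ 2).
Proof.
move=> b0; rewrite /ddx; set r := repr _; set N := \n_r; set D := \d_r.
have D0 : D != 0 := denom_ratioP r.
have /eqP e : a * D == N * b.
  by rewrite -eq_frac // /N /D /r -fracE.
have e' : a^`() * D + a * D^`() = N^`() * b + N * b^`() by rewrite -!derivM e.
apply/eqP; rewrite eq_frac ?expf_neq0 //; apply/eqP/eqP; rewrite -subr_eq0; apply/eqP.
(* the difference is a combination of [a D - N b] and of its derivative *)
transitivity ((D * b^`() + D^`() * b) * (a * D - N * b)
   - D * b * (a^`() * D + a * D^`() - (N^`() * b + N * b^`()))); first by ring.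
by rewrite e e' !subrr !mulr0 subrr.
Qed.

Lemma ddxB (f g : ratfun K) : ddx (f - g) = ddx f - ddx g.
Proof.
elim/(@frac_ind {poly K}): f => a b b0; elim/(@frac_ind {poly K}): g => c d d0.
rewrite subf_frac // !ddx_frac ?mulf_neq0 // subf_frac ?expf_neq0 //.
apply/eqP; rewrite eq_frac ?mulf_neq0 ?expf_neq0 //; apply/eqP.
by rewrite !(derivD, derivN, derivM); ring.
Qed.

HB.instance Definition _ := GRing.isZmodMorphism.Build _ _ (@ddx K) ddxB.

Lemma ddxM (f g : ratfun K) : ddx (f * g) = ddx f * g + f * ddx g.
Proof.
elim/(@frac_ind {poly K}): f => a b b0; elim/(@frac_ind {poly K}): g => c d d0.
rewrite mulf_div -!tofracM !ddx_frac ?mulf_neq0 // !mulf_div -!tofracM.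
rewrite addf_div ?tofrac_eq0 ?mulf_neq0 ?expf_neq0 // -!tofracM -tofracD.
apply/eqP; rewrite eq_frac ?mulf_neq0 ?expf_neq0 //; apply/eqP.
by rewrite !(derivD, derivM); ring.
Qed.

Local Notation Dx := (map_poly (@ddx K)).

Lemma map_ddxM (a b : {poly ratfun K}) : Dx (a * b) = Dx a * b + a * Dx b.
Proof.
apply/polyP => i; rewrite coef_map_id0 ?raddf0 // coefD !coefM raddf_sum -big_split.
by apply: eq_bigr => j _; rewrite !coef_map_id0 ?raddf0 //; apply: ddxM.
Qed.

Lemma map_ddxX : Dx 'X = 0.
Proof.
apply/polyP => i; rewrite coef_map_id0 ?raddf0 // coefX coef0.
by case: (i == 1)%N; [exact: derivation1 ddxM | exact: raddf0].
Qed.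
End Ddx.

Section DvdpXn.
Context {F : fieldType}.
Implicit Types (a b c d e u w : {poly F}) (f g : pseries F).

Lemma dvdp_subC e a b : (e %| a - b) = (e %| b - a).
Proof. by rewrite -opprB dvdpNr. Qed.

Lemma dvdp_sub_trans e a b c : e %| a - b -> e %| b - c -> e %| a - c.
Proof. by move=> eab ebc; rewrite -(subrKA b) dvdp_add. Qed.

Lemma dvdp_subB e a b c d : e %| a - b -> e %| c - d -> e %| (a - c) - (b - d).
Proof.
move=> eab ecd; rewrite (_ : a - c - _ = (a - b) - (c - d)); last by ring.
exact: dvdp_sub.
Qed.

Lemma dvdp_subM e a b c d : e %| a - b -> e %| c - d -> e %| a * c - b * d.
Proof.
move=> eab ecd; rewrite (_ : a * c - _ = (a - b) * c + b * (c - d)); last by ring.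
by apply: dvdp_add; [apply: dvdp_mulr | apply: dvdp_mull].
Qed.

Lemma dvdp_XnP m a : reflect (forall i, (i < m)%N -> a`_i = 0) ('X^m %| a).
Proof.
rewrite /dvdp -Pdiv.IdomainMonic.take_poly_modp; apply: (iffP eqP) => [a0 i im | a0].
  by have := coef_take_poly m a i; rewrite a0 im coef0.
by apply/polyP => i; rewrite coef_take_poly coef0; case: ifP => // /a0.
Qed.

Lemma Xn_factor a : a != 0 ->
  exists2 v, (v < size a)%N & exists2 u, a = 'X^v * u & ~~ root u 0.
Proof.
move=> a0; have [v [u]] := multiplicity_XsubC a 0; rewrite a0 subr0 /= => u0 aE.
have nz_u : u != 0 by apply: contraNneq u0 => ->; rewrite root0.
exists v; last by exists u; rewrite // mulrC.
by rewrite aE size_mulXn // -addn1 leq_add2l lt0n size_poly_eq0.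
Qed.

Lemma Xn_factor_congr v u b : ~~ root u 0 -> 'X^(v.+1) %| b - 'X^v * u ->
  exists2 u', b = 'X^v * u' & ~~ root u' 0.
Proof.
move=> u0 /dvdpP [c bE]; exists (u + c * 'X).
  by rewrite mulrDr mulrCA -exprSr -bE addrC subrK.
by rewrite /root hornerD hornerMX mulr0 addr0.
Qed.

Lemma dvdp_Xn_cancel v r m u w : ~~ root u 0 ->
  'X^(r * v + m) %| ('X^v * u) ^+ r * w -> 'X^m %| w.
Proof.
move=> u0; rewrite exprMn -exprM mulnC -mulrA exprD.
rewrite dvdp_mul2l ?expf_neq0 ?polyX_eq0 // Gauss_dvdpr //.
by rewrite coprimep_expl // coprimep_expr // coprimep_sym coprimepX.
Qed.

Lemma dvdp_trunc n N f : (n <= N)%N -> 'X^(n.+1) %| trunc N f - trunc n f.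
Proof.
move=> nN; apply/dvdp_XnP => i ni.
by rewrite coefB !coef_poly ni (leq_trans ni (nN : n < N.+1)%N) subrr.
Qed.

Lemma dvdp_trunc_mul N f g :
  'X^(N.+1) %| trunc N (psmul f g) - trunc N f * trunc N g.
Proof.
apply/dvdp_XnP => i iN; apply/eqP; rewrite coefB coefM coef_poly iN subr_eq0.
apply/eqP/eq_bigr => j _.
by rewrite !coef_poly (leq_ltn_trans (leq_ord j) iN) (leq_ltn_trans (leq_subr j i) iN).
Qed.

Lemma dvdp_trunc_exp N f k : 'X^(N.+1) %| trunc N (psexp f k) - trunc N f ^+ k.
Proof.
elim: k => [|k IHk].
  apply/dvdp_XnP => i iN; rewrite coefB coef_poly iN coef1 /psexp /psone /=.
  by case: eqP; rewrite subrr.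
apply: dvdp_sub_trans (dvdp_trunc_mul _ _ _) _.
by rewrite [trunc N f ^+ _]exprS; apply: dvdp_subM; rewrite // subrr dvdp0.
Qed.
End DvdpXn.

Section Derivation.
Context {F : fieldType}.
Implicit Types (a c : {poly F}).
Variable D : {additive {poly F} -> {poly F}}.
Hypothesis DM : forall a b, D (a * b) = D a * b + a * D b.

Lemma derivationXS a k : D (a ^+ k.+1) = k.+1%:R * a ^+ k * D a.
Proof.
elim: k => [|k IHk]; first by rewrite expr1 expr0 mulr1 mul1r.
by rewrite exprS DM IHk !exprS; ring.
Qed.

Lemma mul_derivationX a k : a * D (a ^+ k) = k%:R * a ^+ k * D a.
Proof.
case: k => [|k]; first by rewrite expr0 (derivation1 DM) mulr0 !mul0r.
by rewrite derivationXS !exprS; ring.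
Qed.

Lemma dvdp_derivationS m c : 'X^(m.+1) %| c -> 'X^m %| D c.
Proof.
case/dvdpP => d ->; rewrite DM derivationXS exprS.
apply: dvdp_add; first exact/dvdp_mull/dvdp_mull/dvdpp.
exact/dvdp_mull/dvdp_mulr/dvdp_mull/dvdpp.
Qed.

Lemma dvdp_derivation m c : D 'X = 0 -> 'X^m %| c -> 'X^m %| D c.
Proof.
move=> DX0; have DXn : D 'X^m = 0.
  by case: m => [|m]; rewrite ?(derivation1 DM) // derivationXS DX0 mulr0.
by case/dvdpP => d ->; rewrite DM DXn mulr0 addr0; apply/dvdp_mull/dvdpp.
Qed.
End Derivation.

Lemma dvdp_deriv {F : fieldType} m (c : {poly F}) :
  'X^(m.+1) %| c -> 'X^m %| c^`().
Proof. exact: (dvdp_derivationS (D := deriv) (@derivM _)). Qed.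

Lemma dvdp_map_ddx {K : fieldType} m (c : {poly ratfun K}) :
  'X^m %| c -> 'X^m %| map_poly (@ddx K) c.
Proof. exact: dvdp_derivation map_ddxM _ _ map_ddxX. Qed.

Lemma size_map_ddx {K : fieldType} (c : {poly ratfun K}) :
  (size (map_poly (@ddx K) c) <= size c)%N.
Proof. exact: size_poly. Qed.

Lemma leq_size_deriv {R : nzRingType} n (c : {poly R}) :
  (size c <= n.+1 -> size c^`() <= n)%N.
Proof.
by move=> sc; apply: leq_trans (size_poly _ _) _; rewrite -subn1 leq_subLR add1n.
Qed.

(* [fdx] and [fdy] of [omega_form p q Pn Qn] are [omega_coef D p q Pn Qn]
   for D = [map_poly ddx] and D = [deriv] respectively. *)
Definition omega_coef {F : fieldType} (D : {poly F} -> {poly F}) (p q : nat)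
  (A B : {poly F}) : {poly F} :=
  p%:R * B * D A - q%:R * A * D B.

Section OmegaCoef.
Context {F : fieldType}.
Implicit Types (a A B c e : {poly F}).

Lemma dvdp_omega_coef_sub e (D : {poly F} -> {poly F}) p q A B A' B' :
  e %| A - A' -> e %| B - B' -> e %| D A - D A' -> e %| D B - D B' ->
  e %| omega_coef D p q A B - omega_coef D p q A' B'.
Proof.
move=> eA eB eDA eDB; apply: dvdp_subB; apply: dvdp_subM => //;
  by apply: dvdp_subM; rewrite // subrr dvdp0.
Qed.

Lemma size_omega_coef (D : {poly F} -> {poly F}) p q A B s t :
  (size A <= s.+1)%N -> (size B <= s.+1)%N ->
  (size (D A) <= t)%N -> (size (D B) <= t)%N ->
  (size (omega_coef D p q A B) <= s + t)%N.
Proof.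
have size_term k (a b : {poly F}) : (size (k%:R * a * b)%R <= (size a + size b).-1)%N.
  rewrite -mulrA -polyC_natr mul_polyC.
  exact: leq_trans (size_scale_leq _ _) (size_polyMleq _ _).
move=> sA sB sDA sDB; rewrite /omega_coef.
apply: leq_trans (size_polyD _ _) _; rewrite size_polyN geq_max.
by rewrite !(leq_trans (size_term _ _ _)) //; lia.
Qed.

Variable D : {additive {poly F} -> {poly F}}.
Hypothesis DM : forall a b, D (a * b) = D a * b + a * D b.

Lemma omega_coef_mulXp p q A B :
  A ^+ p * omega_coef D p q A B =
  A * B * D (A ^+ p - B ^+ q) + q%:R * A * D B * (B ^+ q - A ^+ p).
Proof.
rewrite raddfB (_ : A * B * _ = B * (A * D (A ^+ p)) - A * (B * D (B ^+ q))).
  by rewrite !(mul_derivationX DM) /omega_coef; ring.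
by ring.
Qed.

(* k = 0 for d/dx and k = 1 for d/dy. *)
Variable k : nat.
Hypothesis dvdp_D : forall m c, 'X^(k + m) %| c -> 'X^m %| D c.

Lemma dvdp_omega_coef_cancel m v u p q A B : ~~ root u 0 ->
  'X^(v.+1) %| A - 'X^v * u -> 'X^(k + (p * v + m)) %| A ^+ p - B ^+ q ->
  'X^m %| omega_coef D p q A B.
Proof.
move=> u0 /(Xn_factor_congr u0) [u' AE u'0] AB.
apply: (dvdp_Xn_cancel (r := p) (v := v) u'0); rewrite -AE omega_coef_mulXp.
apply: dvdp_add; apply: dvdp_mull; first exact: dvdp_D.
rewrite dvdp_subC; apply: dvdp_trans AB; exact/dvdp_exp2l/leq_addl.
Qed.

Lemma dvdp_omega_coef_trunc m n p q (P Q : pseries F) :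
  psexp P p = psexp Q q -> (k + m <= n.+1)%N ->
  'X^m %| omega_coef D p q (trunc n P) (trunc n Q).
Proof.
move=> ePQ kmn; have [P0 | /Xn_factor [v vn [u PE u0]]] := eqVneq (trunc n P) 0.
  by rewrite P0 /omega_coef raddf0 !(mulr0, mul0r) subrr dvdp0.
have vn' : (v <= n)%N by rewrite -ltnS (leq_trans vn) ?size_poly.
(* Leaves room for cancelling [trunc N P ^+ p], of valuation [p * v]. *)
set N := (p * v + n)%N.
have truncXkm (f : pseries F) : 'X^(k + m) %| trunc n f - trunc N f.
  by rewrite dvdp_subC (dvdp_trans (dvdp_exp2l _ kmn)) ?dvdp_trunc ?leq_addl.
have AB : 'X^(N.+1) %| trunc N P ^+ p - trunc N Q ^+ q.
  apply: (dvdp_sub_trans (b := trunc N (psexp P p))).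
    by rewrite dvdp_subC; apply: dvdp_trunc_exp.
  by rewrite ePQ; apply: dvdp_trunc_exp.
have omegaN : 'X^m %| omega_coef D p q (trunc N P) (trunc N Q).
  apply: (dvdp_omega_coef_cancel (v := v) (u := u) u0).
    by rewrite -PE (dvdp_trans (dvdp_exp2l _ (vn' : v < n.+1)%N)) ?dvdp_trunc ?leq_addl.
  by apply: dvdp_trans AB; apply: dvdp_exp2l; rewrite /N; lia.
have truncXm (f : pseries F) : 'X^m %| trunc n f - trunc N f.
  exact: dvdp_trans (dvdp_exp2l _ (leq_addl k m)) (truncXkm f).
have DtruncXm (f : pseries F) : 'X^m %| D (trunc n f) - D (trunc N f).
  by rewrite -raddfB; apply/dvdp_D/truncXkm.
rewrite -(subrK (omega_coef D p q (trunc N P) (trunc N Q)) (omega_coef _ _ _ _ _)).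
apply: dvdp_add omegaN.
exact: dvdp_omega_coef_sub (truncXm P) (truncXm Q) (DtruncXm P) (DtruncXm Q).
Qed.
End OmegaCoef.

Section ReducedForm.
Context {K : fieldType}.
Implicit Types (w : oneform K).

Lemma vanishes_on_y0_div_yn n w :
  'X^(n.+1) %| fdx w -> vanishes_on_y0 (form_div_yn n w).
Proof.
case/dvdpP => c cE; rewrite /vanishes_on_y0 /= cE exprS mulrA.
by rewrite mulpK ?expf_neq0 ?polyX_eq0 // hornerMX mulr0.
Qed.

Lemma form_degy_div_yn n w :
  (size (fdx w) <= n + n.+1)%N -> (size (fdy w) <= n + n)%N ->
  (form_degy (form_div_yn n w) <= n)%N.
Proof.
rewrite /form_degy /= -!Pdiv.IdomainMonic.drop_poly_divp !size_drop_poly geq_max.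
by move: (size _) (size _) => sx sy ? ?; apply/andP; split; lia.
Qed.
End ReducedForm.

Unset Implicit Arguments.

Theorem mainTheorem9 (K : fieldType) (p q : nat) (P Q : pseries (ratfun K)) :
  (0 < p)%N -> (0 < q)%N -> coprime p q ->
  psexp P p = psexp Q q ->
  forall n : nat,
    let w := omega_form p q (trunc n P) (trunc n Q) in
    [/\ form_divisible_by_yn n w,
        (form_degy (form_div_yn n w) <= n)%N
      & vanishes_on_y0 (form_div_yn n w)].
Proof.
(* The argument works for all p and q. *)
move=> _ _ _ ePQ n w.
have wx : 'X^(n.+1) %| fdx w.
  exact: (dvdp_omega_coef_trunc (k := 0) map_ddxM dvdp_map_ddx ePQ (leqnn _)).
have wy : 'X^n %| fdy w.
  exact: (dvdp_omega_coef_trunc (k := 1) (@derivM _) dvdp_deriv ePQ (leqnn _)).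
have sP : (size (trunc n P) <= n.+1)%N := size_poly _ _.
have sQ : (size (trunc n Q) <= n.+1)%N := size_poly _ _.
split.
- by rewrite /form_divisible_by_yn wy (dvdp_trans (dvdp_exp2l _ (leqnSn n)) wx).
- apply: (form_degy_div_yn (w := w)).
    by apply: size_omega_coef; rewrite ?(leq_trans (size_map_ddx _)).
  by apply: size_omega_coef; rewrite ?leq_size_deriv.
- exact: vanishes_on_y0_div_yn.
Qed.
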